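(* Consider a multi-threaded program in the ActiveMonitor execution model described in the context, in which every execution satisfies Rules 1 and 2 below (Rule 3 of forcing completion across different monitors is not assumed). Then every such execution is linearizable, where the invocation of a monitor operation is interpreted as the submission of its corresponding task and its response is interpreted as the completion of that task, and where the per-thread order is the thread order $<$ defined in the context. That is, there exists a legal sequential history of all operations, consistent with the order in which the monitor threads execute the tasks, that respects the thread order $<$ of every worker thread (taking as the linearization point of each operation the instant at which the monitor thread finishes executing the corresponding task). Rule 1 (Mutex invariant): all tasks of a single monitor object are executed by the same monitor thread. Rule 2: for any two tasks $s,t$ submitted to the same monitor $M$ with $proc(s)=proc(t)$, if $sub(s)<sub(t)$ then $exe(s)<exe(t)$.
   Context: Execution model (ActiveMonitor). A monitor object encapsulates shared data; each monitor object is executed by a monitor thread. Worker threads (threads created by the user program) never execute monitor methods directly: each invocation of a monitor method by a worker thread is replaced by the submission of an equivalent monitor task to the monitor thread, which executes it. A monitor task $t$ consists of a boolean precondition $P$ and a set of statements $\mathcal{S}$; $t$ is executable when $P$ holds, and then the statements of $\mathcal{S}$ may be executed to complete $t$. Each task is either blocking or non-blocking. If a worker thread submits a blocking task, it cannot execute its next instruction (in particular cannot submit another task) until the task has been completed. If it submits a non-blocking task, it continues immediately, while the task is executed by the monitor thread; if the worker thread later needs the result of a non-blocking task, it blocks until that task is completed. Notation: $proc(t)$ is the worker thread that submits task $t$; $sub(t)$ is the time at which $t$ is submitted to its monitor; $exe(t)$ is the time at which the monitor thread starts executing $t$. Thread order: let $s_1, s_2, \dots, s_m$ be the operations (tasks)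 issued by one worker thread, in the order in which the thread issues them. The thread order $<$ on them is the (transitive closure of the) relation given by: if $s_i$ is blocking then $s_i < s_j$ for all $j>i$; if $s_i$ and $s_j$ are operations on the same monitor object and $i<j$ then $s_i<s_j$; if $s_i$ is non-blocking and its result is required before $s_k$ is issued, then $s_i<s_j$ for all $j\ge k$. *)

From mathcomp Require Import all_boot.
From Stdlib Require Export Relations.Relation_Operators.
Set Implicit Arguments. Unset Strict Implicit. Unset Printing Implicit Defensive.

(* An execution consists of a finite set of tasks T (one per monitor-operation
   invocation).  For a task t:
     mon t      : the monitor object the task is submitted to;
     proc t     : the worker thread that submits it  (proc(t));
     idx t      : its position in the issue order of proc t (s_1, s_2, ...);
     blocking t : whether the task is blocking;
     req s k    : s is non-blocking and its result is required (by proc s)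
                  before k is issued;
     sub t      : submission time (invocation);
     exe t      : time the monitor thread starts executing t;
     cmp t      : time the monitor thread finishes executing t (response).   *)

Definition thread_step (T M P : Type) (mon : T -> M) (proc : T -> P)
  (idx : T -> nat) (blocking : T -> bool) (req : T -> T -> bool) (s t : T) : Prop :=
  proc s = proc t /\ idx s < idx t /\
  (blocking s \/ mon s = mon t \/
   exists k, proc k = proc s /\ req s k /\ idx k <= idx t).

Definition thread_order (T M P : Type) (mon : T -> M) (proc : T -> P)
  (idx : T -> nat) (blocking : T -> bool) (req : T -> T -> bool) : T -> T -> Prop :=
  clos_trans T (thread_step mon proc idx blocking req).

Definition before (T : eqType) (lin : seq T) (s t : T) : bool :=
  index s lin < index t lin.

From mathcomp Require Import all_boot.

(* Linearize every task at its completion time: order all tasks by [cmp].  On one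
   monitor thread executions do not overlap, so completion order is execution
   order, which makes the history legal.  Each generating step s < t of the thread
   order forces [cmp s <= sub t] -- directly when s blocks or its result is
   required, and by Rule 2 plus mutual exclusion when s and t share a monitor --
   hence [cmp s < cmp t], and the thread order is respected. *)

Set Implicit Arguments. Unset Strict Implicit. Unset Printing Implicit Defensive.

Section SortByKey.

Variables (T : finType) (key : T -> nat).

Definition sort_by_key : seq T := sort (fun x y => key x <= key y) (enum T).

Lemma perm_sort_by_key : perm_eq sort_by_key (enum T).
Proof. by rewrite /sort_by_key perm_sort. Qed.

Lemma index_sort_by_key_le s t :
  index s sort_by_key <= index t sort_by_key -> key s <= key t.
Proof.
have mem_lin x : x \in sort_by_key by rewrite mem_sort mem_enum.
have sorted_lin : sorted (fun x y => key x <= key y) sort_by_key.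
  by apply: sort_sorted => x y; exact: leq_total.
have key_trans : transitive (fun x y => key x <= key y).
  by move=> y x z /= ; exact: leq_trans.
have := sorted_leq_nth key_trans (fun x => leqnn (key x)) s sorted_lin
  (index s sort_by_key) (index t sort_by_key).
by rewrite !inE !index_mem !mem_lin !nth_index //; apply.
Qed.

Lemma before_sort_by_key s t : before sort_by_key s t -> key s <= key t.
Proof. by move/ltnW/index_sort_by_key_le. Qed.

Lemma ltn_key_before s t : key s < key t -> before sort_by_key s t.
Proof.
move=> lt_st; rewrite /before ltnNge; apply/negP => /index_sort_by_key_le.
by rewrite leqNgt lt_st.
Qed.

Lemma before_sort_by_keyE s t :
  key s != key t -> before sort_by_key s t = (key s < key t).
Proof.
move=> neq_key; apply/idP/idP => [/before_sort_by_key | /ltn_key_before //].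
by rewrite ltn_neqAle neq_key.
Qed.

End SortByKey.

Section Execution.

Variables (T : finType) (M P MT : Type).
Variables (mon : T -> M) (proc : T -> P) (idx : T -> nat).
Variables (blocking : T -> bool) (req : T -> T -> bool) (exec_by : T -> MT).
Variables (sub exe cmp : T -> nat).

Hypothesis idx_inj : forall s t, proc s = proc t -> idx s = idx t -> s = t.
Hypothesis sub_issue : forall s t, proc s = proc t -> idx s < idx t -> sub s < sub t.
Hypothesis sub_exe : forall t, sub t <= exe t.
Hypothesis exe_cmp : forall t, exe t < cmp t.
Hypothesis exclusive : forall s t, s != t -> exec_by s = exec_by t ->
  cmp s <= exe t \/ cmp t <= exe s.
Hypothesis block_cmp : forall s t, blocking s -> proc s = proc t -> idx s < idx t ->
  cmp s <= sub t.
Hypothesis req_cmp : forall s k, req s k ->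
  [/\ ~~ blocking s, proc k = proc s, idx s < idx k & cmp s <= sub k].
Hypothesis Rule1 : forall s t, mon s = mon t -> exec_by s = exec_by t.
Hypothesis Rule2 : forall s t, mon s = mon t -> proc s = proc t -> sub s < sub t ->
  exe s < exe t.

Lemma cmp_le_sub_ltn s t : cmp s <= sub t -> cmp s < cmp t.
Proof. by move=> le_st; exact: leq_ltn_trans (leq_trans le_st (sub_exe t)) (exe_cmp t). Qed.

Lemma exclusive_cmp_neq s t : s != t -> exec_by s = exec_by t -> cmp s != cmp t.
Proof.
move=> neq_st same_thread.
case: (exclusive neq_st same_thread) => le_cmp_exe.
  by rewrite neq_ltn (leq_ltn_trans le_cmp_exe (exe_cmp t)).
by rewrite neq_ltn (leq_ltn_trans le_cmp_exe (exe_cmp s)) orbT.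
Qed.

Lemma exclusive_exe_cmp s t : s != t -> exec_by s = exec_by t ->
  (exe s < exe t) = (cmp s < cmp t).
Proof.
move=> neq_st same_thread.
case: (exclusive neq_st same_thread) => le_cmp_exe.
  have lt_exe : exe s < exe t := leq_trans (exe_cmp s) le_cmp_exe.
  by rewrite lt_exe (leq_ltn_trans le_cmp_exe (exe_cmp t)).
have lt_exe : exe t < exe s := leq_trans (exe_cmp t) le_cmp_exe.
have lt_cmp : cmp t < cmp s := leq_ltn_trans le_cmp_exe (exe_cmp s).
by rewrite ltnNge (ltnW lt_exe) ltnNge (ltnW lt_cmp).
Qed.

Lemma sub_le_issue s t : proc s = proc t -> idx s <= idx t -> sub s <= sub t.
Proof.
move=> same_proc; rewrite leq_eqVlt => /orP[/eqP eq_idx | lt_idx].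
  by rewrite (idx_inj same_proc eq_idx).
exact: ltnW (sub_issue same_proc lt_idx).
Qed.

Lemma thread_step_cmp s t :
  thread_step mon proc idx blocking req s t -> cmp s < cmp t.
Proof.
move=> [same_proc [lt_idx [blk | [same_mon | [k [proc_k [req_sk le_kt]]]]]]].
- exact: cmp_le_sub_ltn (block_cmp blk same_proc lt_idx).
- have neq_st : s != t by apply: contraTneq lt_idx => ->; rewrite ltnn.
  have lt_exe := Rule2 same_mon same_proc (sub_issue same_proc lt_idx).
  by rewrite -(exclusive_exe_cmp neq_st (Rule1 same_mon)).
- case: (req_cmp req_sk) => _ _ _ le_cmp_sub; apply: cmp_le_sub_ltn.
  exact: leq_trans le_cmp_sub (sub_le_issue (etrans proc_k same_proc) le_kt).
Qed.

Lemma thread_order_cmp s t :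
  thread_order mon proc idx blocking req s t -> cmp s < cmp t.
Proof.
elim=> [x y /thread_step_cmp // | x y z _ lt_xy _ lt_yz].
exact: ltn_trans lt_xy lt_yz.
Qed.

End Execution.

Theorem lemma2 (T : finType) (M P MT : Type)
  (mon : T -> M) (proc : T -> P) (idx : T -> nat)
  (blocking : T -> bool) (req : T -> T -> bool)
  (exec_by : T -> MT)
  (sub exe cmp : T -> nat)
  (H_idx_inj : forall s t, proc s = proc t -> idx s = idx t -> s = t)
  (H_issue : forall s t, proc s = proc t -> idx s < idx t -> sub s < sub t)
  (H_sub_exe : forall t, sub t <= exe t)
  (H_exe_cmp : forall t, exe t < cmp t)
  (H_seq : forall s t, s != t -> exec_by s = exec_by t ->
             cmp s <= exe t \/ cmp t <= exe s)
  (H_block : forall s t, blocking s -> proc s = proc t -> idx s < idx t ->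
               cmp s <= sub t)
  (H_req : forall s k, req s k ->
             [/\ ~~ blocking s, proc k = proc s, idx s < idx k & cmp s <= sub k])
  (Rule1 : forall s t, mon s = mon t -> exec_by s = exec_by t)
  (Rule2 : forall s t, mon s = mon t -> proc s = proc t -> sub s < sub t ->
             exe s < exe t) :
  exists lin : seq T,
    [/\ perm_eq lin (enum T),
        (forall s t, before lin s t -> cmp s <= cmp t),
        (forall s t, s != t -> mon s = mon t ->
           before lin s t = (exe s < exe t))
      & (forall s t, thread_order mon proc idx blocking req s t ->
           before lin s t)].
Proof.
exists (sort_by_key cmp); split.
- exact: perm_sort_by_key.
- exact: before_sort_by_key.
- move=> s t neq_st same_mon.
  have same_thread := Rule1 s t same_mon.
  rewrite (exclusive_exe_cmp H_exe_cmp H_seq neq_st same_thread).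
  exact: before_sort_by_keyE (exclusive_cmp_neq H_exe_cmp H_seq neq_st same_thread).
- move=> s t /(thread_order_cmp H_idx_inj H_issue H_sub_exe H_exe_cmp H_seq
    H_block H_req Rule1 Rule2).
  exact: ltn_key_before.
Qed.
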